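(* Let $F$ be a dill map with diameter $\delta$ and local rule $f$, and let $M,M'\in\mathbb N$ be such that for every $u\in A^*$ and every $j\in\{0,\dots,|u|-1\}$, $d_L(f^*(D_j(u)),f^*(u))\le M+\frac{|f^*(u)|-|f^*(D_j(u))|}{2}$ and $d_L(f^*(D_j(u)),f^*(u))\le M'-\frac{|f^*(u)|-|f^*(D_j(u))|}{2}$. Then for all $l\in\mathbb N$ and all $u,v\in A^l$, $d_L(f^*(u),f^*(v))\le (M+M')\,d_L(u,v)-\frac{\big||f^*(u)|-|f^*(v)|\big|}{2}$.
   Context: $A$ is a finite alphabet, $A^*$ the finite words, $A^+$ the nonempty finite words, $u_{[i,j)}=u_i\cdots u_{j-1}$. A dill map with diameter $\delta\ge1$ has local rule $f:A^\delta\to A^+$ and is $F(x)=f(x_{[0,\delta)})f(x_{[1,\delta+1)})\cdots$. Its extension $f^*:A^*\to A^*$ is $f^*(u)=f(u_{[0,\delta)})f(u_{[1,\delta+1)})\cdots f(u_{[|u|-\delta,|u|)})$ if $|u|\ge\delta$, and $f^*(u)$ is the empty word if $|u|<\delta$. The deletion $D_j(u)=u_0\cdots u_{j-1}u_{j+1}\cdots u_{|u|-1}$. The Levenshtein distance is $d_L(u,v)=\frac12\min\{m+m': D_{j_1}\circ\cdots\circ D_{j_m}(u)=D_{j'_1}\circ\cdots\circ D_{j'_{m'}}(v)\}$ (equivalently $\frac{|u|+|v|}{2}$ minus the length of a longest common subsequence). *)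

From mathcomp Require Import all_boot all_order all_algebra.
Set Implicit Arguments. Unset Strict Implicit. Unset Printing Implicit Defensive.
Import Order.TTheory GRing.Theory Num.Theory.

Definition del (A : Type) (j : nat) (u : seq A) : seq A := take j u ++ drop j.+1 u.

Definition fstar (A : Type) (delta : nat) (f : seq A -> seq A) (u : seq A) : seq A :=
  if delta <= size u then
    flatten [seq f (take delta (drop i u)) | i <- iota 0 (size u - delta).+1]
  else [::].

Definition lcs (A : finType) (u v : seq A) : nat :=
  \max_(m : (size u).-tuple bool | subseq (mask m u) v) size (mask m u).

(* Levenshtein distance (insertions/deletions): (|u|+|v|)/2 - lcs(u,v). *)
Definition dL (A : finType) (u v : seq A) : rat :=
  ((size u + size v)%:R / 2 - (lcs u v)%:R)%R.

(* Let w be a longest common subsequence of u and v; as |u| = |v|, both u and v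
   are reached from w by k = d_L(u,v) single-letter insertions.  Along such a
   chain the triangle inequality for d_L adds up the two hypotheses, the size
   terms telescoping: d_L(f^*(w), f^*(u)) <= kM + (|f^*(u)| - |f^*(w)|)/2 and
   <= kM' - (|f^*(u)| - |f^*(w)|)/2, and likewise for v.  One more triangle
   inequality through f^*(w), choosing the M-bound on one side and the M'-bound
   on the other according to the sign of |f^*(u)| - |f^*(v)|, gives the claim. *)
From mathcomp Require Import all_boot all_order all_algebra.
From mathcomp Require Import lra zify.
Import Order.TTheory GRing.Theory Num.Theory.
Set Implicit Arguments. Unset Strict Implicit.
Local Open Scope ring_scope.

Lemma subseq_consE (A : eqType) (s y : seq A) a :
  subseq s (a :: y) -> subseq s y \/ exists2 s', s = a :: s' & subseq s' y.
Proof.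
case: s => [|x s'] /=; first by left; rewrite sub0seq.
by case: eqP => [-> h|_ h]; [right; exists s' | left].
Qed.

Lemma subseq_overlap (A : eqType) (y s1 s2 : seq A) :
  subseq s1 y -> subseq s2 y ->
  exists t, [/\ subseq t s1, subseq t s2 & (size s1 + size s2 <= size t + size y)%N].
Proof.
elim: y s1 s2 => [|a y IH] s1 s2.
  by rewrite !subseq0 => /eqP -> /eqP ->; exists [::].
move=> /subseq_consE [h1|[s1' -> h1]] /subseq_consE [h2|[s2' -> h2]];
  have [t [t1 t2 ht]] := IH _ _ h1 h2.
- by exists t; split=> //=; lia.
- exists t; split=> //=; last lia.
  exact: subseq_trans t2 (subseq_cons _ _).
- exists t; split=> //=; last lia.
  exact: subseq_trans t1 (subseq_cons _ _).
- by exists (a :: t); split=> /=; rewrite ?eqxx //; lia.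
Qed.

Lemma size_del (A : Type) j (x : seq A) :
  (j < size x)%N -> size (del j x) = (size x).-1.
Proof.
move=> hj; rewrite /del size_cat size_take size_drop hj.
by case: (size x) hj => // n hj; rewrite subSS; lia.
Qed.

Lemma subseq_del (A : eqType) (w x : seq A) :
  subseq w x -> (size w < size x)%N -> exists2 j, (j < size x)%N & subseq w (del j x).
Proof.
elim: x w => [|a x IH] w //= /subseq_consE [h|[w' -> h]] hs.
  by exists 0%N => //; rewrite /del /= drop0.
have [j hj hw] := IH _ h hs.
by exists j.+1 => //=; rewrite /del /= eqxx.
Qed.

Section LongestCommonSubsequence.
Variable A : finType.
Implicit Types s u v x y z : seq A.

Lemma leq_size_lcs s u v : subseq s u -> subseq s v -> (size s <= lcs u v)%N.
Proof.
case/subseqP=> m sm -> sv.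
pose t : (size u).-tuple bool := Tuple (introT eqP sm).
exact: (@leq_bigmax_cond _ (fun t : (size u).-tuple bool => subseq (mask t u) v)
   (fun t : (size u).-tuple bool => size (mask t u)) t).
Qed.

Lemma lcs_witness u v :
  exists s, [/\ subseq s u, subseq s v & size s = lcs u v].
Proof.
rewrite /lcs.
have c0 : (0 < #|[pred t : (size u).-tuple bool | subseq (mask t u) v]|)%N.
  by apply/card_gt0P; exists [tuple of nseq (size u) false]; rewrite inE /= mask_false sub0seq.
have [t Pt ->] := eq_bigmax_cond (fun t : (size u).-tuple bool => size (mask t u)) c0.
by exists (mask t u); split=> //; apply: mask_subseq.
Qed.

Lemma lcsC u v : lcs u v = lcs v u.
Proof.
have [s [su sv es]] := lcs_witness u v.
have [t [tv tu et]] := lcs_witness v u.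
by apply/eqP; rewrite eqn_leq -{1}es -{2}et !leq_size_lcs.
Qed.

Lemma lcs_id x : lcs x x = size x.
Proof.
have [s [sx _ es]] := lcs_witness x x.
by apply/eqP; rewrite eqn_leq -{1}es size_subseq // leq_size_lcs.
Qed.

Lemma lcs_triangle x y z : (lcs x y + lcs y z <= lcs x z + size y)%N.
Proof.
have [s1 [s1x s1y <-]] := lcs_witness x y.
have [s2 [s2y s2z <-]] := lcs_witness y z.
have [t [t1 t2 ht]] := subseq_overlap s1y s2y.
apply: leq_trans ht _; rewrite leq_add2r.
by apply: leq_size_lcs; [apply: subseq_trans t1 s1x | apply: subseq_trans t2 s2z].
Qed.

Lemma dLC u v : dL u v = dL v u.
Proof. by rewrite /dL lcsC addnC. Qed.

Lemma dLxx x : dL x x = 0.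
Proof. by rewrite /dL lcs_id natrD; lra. Qed.

Lemma dL_triangle x y z : dL x z <= dL x y + dL y z.
Proof.
have := lcs_triangle x y z; rewrite -(ler_nat rat) !natrD /dL !natrD; lra.
Qed.

End LongestCommonSubsequence.

Section DeletionChains.
Variables (A : finType) (F : seq A -> seq A) (M : nat) (phi : seq A -> rat).
Hypothesis dL_F_del : forall x j, (j < size x)%N ->
  dL (F (del j x)) (F x) <= M%:R + (phi x - phi (del j x)).

Lemma dL_F_subseq n x w : subseq w x -> size x = (size w + n)%N ->
  dL (F w) (F x) <= n%:R * M%:R + (phi x - phi w).
Proof.
elim: n x => [|n IH] x wx sx.
  have -> : w = x by apply/eqP; rewrite -(size_subseq_leqif wx).2 sx addn0.
  by rewrite dLxx; lra.
have [j hj wdx] : exists2 j, (j < size x)%N & subseq w (del j x).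
  by apply: subseq_del wx _; rewrite sx; lia.
have sdx : size (del j x) = (size w + n)%N by rewrite size_del // sx addnS.
have := IH _ wdx sdx.
have := dL_triangle (F w) (F (del j x)) (F x).
have := dL_F_del hj.
rewrite -addn1 natrD; lra.
Qed.

End DeletionChains.

Theorem lemmal (A : finType) (delta : nat) (f : seq A -> seq A) (M M' : nat) :
  (0 < delta)%N ->
  (forall w : seq A, size w = delta -> f w != [::]) ->
  (forall (u : seq A) (j : nat), (j < size u)%N ->
     dL (fstar delta f (del j u)) (fstar delta f u)
       <= M%:R + ((size (fstar delta f u))%:R - (size (fstar delta f (del j u)))%:R) / 2) ->
  (forall (u : seq A) (j : nat), (j < size u)%N ->
     dL (fstar delta f (del j u)) (fstar delta f u)
       <= M'%:R - ((size (fstar delta f u))%:R - (size (fstar delta f (del j u)))%:R) / 2) ->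
  forall (l : nat) (u v : seq A), size u = l -> size v = l ->
    dL (fstar delta f u) (fstar delta f v)
      <= (M + M')%:R * dL u v
         - `|(size (fstar delta f u))%:R - (size (fstar delta f v))%:R : rat| / 2.
Proof.
(* The argument works for any map on words. *)
move=> _ _ HM HM' l u v su sv.
set F := fstar delta f in HM HM' *.
pose phi x : rat := (size (F x))%:R / 2.
have HMphi : forall x j, (j < size x)%N ->
    dL (F (del j x)) (F x) <= M%:R + (phi x - phi (del j x)).
  by move=> x j /HM; rewrite /phi; lra.
have HM'phi : forall x j, (j < size x)%N ->
    dL (F (del j x)) (F x) <= M'%:R + (- phi x - - phi (del j x)).
  by move=> x j /HM'; rewrite /phi; lra.
have [w [wu wv ew]] := lcs_witness u v.
have wl : (size w <= l)%N by rewrite -su size_subseq.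
have uk : size u = (size w + (l - size w))%N by rewrite su subnKC.
have vk : size v = (size w + (l - size w))%N by rewrite sv subnKC.
have -> : dL u v = (l - size w)%:R by rewrite /dL su sv -ew natrB // natrD; lra.
have := dL_F_subseq HMphi wu uk; have := dL_F_subseq HM'phi wu uk.
have := dL_F_subseq HMphi wv vk; have := dL_F_subseq HM'phi wv vk.
have := dL_triangle (F u) (F w) (F v); rewrite [dL (F u) (F w)]dLC.
rewrite /phi [(M + M')%:R * _]mulrC natrD mulrDr.
by case: (lerP 0 ((size (F u))%:R - (size (F v))%:R : rat)) => [/ger0_norm|/ltr0_norm] ->;
  lra.
Qed.
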